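(* Let $\bm{Z}\in\{0,1\}^n$, $\bm{X}\in\mathbb{R}^{n\times p}$, fix $\sigma^2>0$, let $\bm{S}$ be an $n\times n$ symmetric positive semidefinite matrix, and for $\rho^2\ge0$ let $\bm{\Sigma}=\bm{\Sigma}(\rho^2)=\sigma^2\bm{I}_n+\rho^2\bm{S}$. Assume that $\bm{X}^T\bm{\Sigma}^{-1}\bm{X}$ is invertible and $\bm{Z}^T\bm{\Sigma}^{-1}(\bm{I}_n-\bm{X}(\bm{X}^T\bm{\Sigma}^{-1}\bm{X})^{-1}\bm{X}^T\bm{\Sigma}^{-1})\bm{Z}\neq0$ for all $\rho^2\ge0$. Define $$\Delta(\rho^2)=\frac{\bm{Z}^T\bm{\Sigma}^{-1}(\bm{I}_n-\bm{X}(\bm{X}^T\bm{\Sigma}^{-1}\bm{X})^{-1}\bm{X}^T\bm{\Sigma}^{-1})\bm{S}(\bm{I}_n-\bm{\Sigma}^{-1}\bm{X}(\bm{X}^T\bm{\Sigma}^{-1}\bm{X})^{-1}\bm{X}^T)\bm{\Sigma}^{-1}\bm{Z}}{\big(\bm{Z}^T\bm{\Sigma}^{-1}(\bm{I}_n-\bm{X}(\bm{X}^T\bm{\Sigma}^{-1}\bm{X})^{-1}\bm{X}^T\bm{\Sigma}^{-1})\bm{Z}\big)^2}$$ and $$D(\rho^2)=\big(\bm{Z}^T\bm{\Sigma}^{-1}(\bm{I}_n-\bm{X}(\bm{X}^T\bm{\Sigma}^{-1}\bm{X})^{-1}\bm{X}^T\bm{\Sigma}^{-1})\bm{Z}\big)^{-1}.$$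 Then $\Delta(\rho^2)$ is non-increasing in $\rho^2$ and $D(\rho^2)$ is non-decreasing in $\rho^2$.
   Context: $\Delta(\rho^2)$ equals the weighted sum of squared mean imbalances $\sum_k\lambda_k(\sum_{Z_i=1}w_iv_{ki}-\sum_{Z_i=0}w_iv_{ki})^2$ of the eigenvectors of $\bm{S}$ under the GLS implied weights $\bm{w}$, and $D(\rho^2)=\sum_iw_i^2$ is the weight dispersion, where $\bm{w}=\bm{M}(\bm{I}_n-\bm{\Sigma}^{-1}\bm{X}(\bm{X}^T\bm{\Sigma}^{-1}\bm{X})^{-1}\bm{X}^T)\bm{\Sigma}^{-1}\bm{Z}/[\bm{Z}^T\bm{\Sigma}^{-1}(\bm{I}_n-\bm{X}(\bm{X}^T\bm{\Sigma}^{-1}\bm{X})^{-1}\bm{X}^T\bm{\Sigma}^{-1})\bm{Z}]$ with $M_{ii}=2Z_i-1$. *)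

From HB Require Import structures.
From mathcomp Require Import all_boot all_order all_algebra.
From mathcomp Require Import reals.
Set Implicit Arguments. Unset Strict Implicit. Unset Printing Implicit Defensive.
Import Order.TTheory GRing.Theory Num.Theory.
Local Open Scope ring_scope.

Section Defs.
Variables (R : realType) (n p : nat).

Definition psd (S : 'M[R]_n) : Prop :=
  S^T = S /\ forall v : 'cV[R]_n, 0 <= (v^T *m S *m v) ord0 ord0.

Definition Sigma (sigma2 rho2 : R) (S : 'M[R]_n) : 'M[R]_n :=
  sigma2%:M + rho2 *: S.

Definition XSXinv (sigma2 rho2 : R) (S : 'M[R]_n) (X : 'M[R]_(n, p)) : 'M[R]_p :=
  invmx (X^T *m invmx (Sigma sigma2 rho2 S) *m X).

Definition quadZ (sigma2 rho2 : R) (S : 'M[R]_n) (X : 'M[R]_(n, p))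
    (Z : 'cV[R]_n) : R :=
  let Si := invmx (Sigma sigma2 rho2 S) in
  (Z^T *m Si *m (1%:M - X *m XSXinv sigma2 rho2 S X *m X^T *m Si) *m Z)
    ord0 ord0.

Definition Delta (sigma2 rho2 : R) (S : 'M[R]_n) (X : 'M[R]_(n, p))
    (Z : 'cV[R]_n) : R :=
  let Si := invmx (Sigma sigma2 rho2 S) in
  let A := XSXinv sigma2 rho2 S X in
  (Z^T *m Si *m (1%:M - X *m A *m X^T *m Si) *m S
       *m (1%:M - Si *m X *m A *m X^T) *m Si *m Z) ord0 ord0
  / (quadZ sigma2 rho2 S X Z) ^+ 2.

Definition Dd (sigma2 rho2 : R) (S : 'M[R]_n) (X : 'M[R]_(n, p))
    (Z : 'cV[R]_n) : R :=
  (quadZ sigma2 rho2 S X Z)^-1.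

End Defs.

From Pilot Require Import Defs.
From HB Require Import structures.
From mathcomp Require Import all_boot all_order all_algebra.
From mathcomp Require Import reals ring lra.
Import Order.TTheory GRing.Theory Num.Theory.
Local Open Scope ring_scope.
Set Implicit Arguments. Unset Strict Implicit.

(* D(r) is the minimum of v^T Sigma(r) v = sigma2 |v|^2 + r v^T S v over the
   weights v with X^T v = 0 and Z^T v = 1; it is attained at the GLS weights
   w(r), since Sigma(r) w(r) is orthogonal to every feasible direction, and
   Delta(r) = w(r)^T S w(r) is the slope in r of the affine function realising
   the minimum.  These affine functions have nonnegative slopes, so D is
   non-decreasing; and comparing the minimisers at r1 < r2, each of which is
   no worse than the other at its own parameter, gives
   (r2 - r1) (Delta(r2) - Delta(r1)) <= 0. *)

Lemma affine_min_slope_antitone (R : realDomainType) (a1 b1 a2 b2 r1 r2 : R) :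
  r1 < r2 -> a1 + r1 * b1 <= a2 + r1 * b2 -> a2 + r2 * b2 <= a1 + r2 * b1 ->
  b2 <= b1.
Proof. by move=> lt_r12 min1 min2; nra. Qed.

Definition qform (R : pzRingType) (n : nat) (M : 'M[R]_n) (v : 'cV[R]_n) : R :=
  (v^T *m M *m v) 0 0.

Lemma qformD (R : comPzRingType) (n : nat) (M : 'M[R]_n) (u v : 'cV[R]_n) :
  M^T = M -> qform M (u + v) = qform M u + 2 * (v^T *m M *m u) 0 0 + qform M v.
Proof.
move=> M_sym; have uMv : (u^T *m M *m v) 0 0 = (v^T *m M *m u) 0 0.
  have tr11 (a : 'M[R]_1) : a 0 0 = a^T 0 0 by rewrite mxE.
  by rewrite tr11 !trmx_mul trmxK M_sym mulmxA.
have addE (a b : 'M[R]_1) : (a + b) 0 0 = a 0 0 + b 0 0 by rewrite mxE.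
by rewrite /qform [(u + v)^T]linearD /= !mulmxDl !mulmxDr !addE uMv; ring.
Qed.

Lemma qformZ (R : comPzRingType) (n : nat) (M : 'M[R]_n) (c : R) (v : 'cV[R]_n) :
  qform M (c *: v) = c ^+ 2 * qform M v.
Proof.
rewrite /qform linearZ /= [(c *: v)^T]linearZ /= -!scalemxAl scalerA.
by rewrite [(_ *: (_ : 'M_1)) 0 0]mxE expr2.
Qed.

Lemma qform1_ge0 (R : realDomainType) (n : nat) (v : 'cV[R]_n) : 0 <= qform 1 v.
Proof.
rewrite /qform mulmx1 mxE; apply: sumr_ge0 => i _.
by rewrite mxE -expr2 sqr_ge0.
Qed.

Lemma qform1_eq0 (R : realDomainType) (n : nat) (v : 'cV[R]_n) :
  qform 1 v = 0 -> v = 0.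
Proof.
have sq_ge0 i : 0 <= v^T 0 i * v i 0 by rewrite mxE -expr2 sqr_ge0.
rewrite /qform mulmx1 mxE => /(psumr_eq0P (fun i _ => sq_ge0 i)) v0.
apply/matrixP => i j; rewrite (ord1 j) mxE.
by have /eqP := v0 i isT; rewrite mxE -expr2 sqrf_eq0 => /eqP.
Qed.

Definition gls_resid (R : comUnitRingType) (n p : nat) (Si : 'M[R]_n)
    (X : 'M[R]_(n, p)) : 'M[R]_n :=
  Si - Si *m X *m invmx (X^T *m Si *m X) *m X^T *m Si.

(* The paper's implied weights are [M *m gls_weights Si X Z] for the sign matrix
   [M = diag (2 Z_i - 1)], so its signed imbalances are plain inner products here. *)
Definition gls_weights (R : fieldType) (n p : nat) (Si : 'M[R]_n)
    (X : 'M[R]_(n, p)) (Z : 'cV[R]_n) : 'cV[R]_n :=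
  (qform (gls_resid Si X) Z)^-1 *: (gls_resid Si X *m Z).

Section GlsResid.
Variables (R : comUnitRingType) (n p : nat) (Si : 'M[R]_n) (X : 'M[R]_(n, p)).
Local Notation A := (invmx (X^T *m Si *m X)).

Lemma gls_residEl : Si *m (1%:M - X *m A *m X^T *m Si) = gls_resid Si X.
Proof. by rewrite mulmxBr mulmx1 !mulmxA. Qed.

Lemma gls_residEr : (1%:M - Si *m X *m A *m X^T) *m Si = gls_resid Si X.
Proof. by rewrite mulmxBl mul1mx. Qed.

Hypothesis Si_sym : Si^T = Si.

Lemma gls_resid_sym : (gls_resid Si X)^T = gls_resid Si X.
Proof.
rewrite /gls_resid linearB /= !trmx_mul !trmxK trmx_inv !trmx_mul trmxK Si_sym.
by rewrite !mulmxA.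
Qed.

Hypothesis XSX_unit : X^T *m Si *m X \in unitmx.

Lemma trX_gls_resid : X^T *m gls_resid Si X = 0.
Proof. by rewrite /gls_resid mulmxBr !mulmxA mulmxV // mul1mx subrr. Qed.

Lemma gls_resid_X : gls_resid Si X *m X = 0.
Proof. by apply: trmx_inj; rewrite trmx_mul gls_resid_sym trX_gls_resid trmx0. Qed.

End GlsResid.

Section GlsWeights.
Variables (R : realFieldType) (n p : nat).
Variables (Sg : 'M[R]_n) (X : 'M[R]_(n, p)) (Z : 'cV[R]_n).
Hypotheses (Sg_unit : Sg \in unitmx) (Sg_sym : Sg^T = Sg).
Local Notation Si := (invmx Sg).
Local Notation M := (gls_resid Si X).
Local Notation q := (qform M Z).
Local Notation w := (gls_weights Si X Z).

Lemma invmx_sym : Si^T = Si.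
Proof. by rewrite trmx_inv Sg_sym. Qed.

Lemma qform_gls_weights (S : 'M[R]_n) :
  qform S w = (Z^T *m M *m S *m M *m Z) 0 0 / q ^+ 2.
Proof.
rewrite qformZ exprVn mulrC /qform trmx_mul gls_resid_sym ?invmx_sym //.
by rewrite !mulmxA.
Qed.

Hypothesis XSX_unit : X^T *m Si *m X \in unitmx.

Lemma mul_gls_resid : Sg *m M = 1%:M - X *m invmx (X^T *m Si *m X) *m X^T *m Si.
Proof. by rewrite -gls_residEl mulmxA mulmxV // mul1mx. Qed.

Lemma gls_resid_idem : M *m Sg *m M = M.
Proof.
rewrite -mulmxA mul_gls_resid mulmxBr mulmx1 !mulmxA gls_resid_X ?invmx_sym //.
by rewrite !mul0mx subr0.
Qed.

Hypothesis q_neq0 : q != 0.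

Lemma trX_gls_weights : X^T *m w = 0.
Proof. by rewrite -scalemxAr mulmxA trX_gls_resid // mul0mx scaler0. Qed.

Lemma trZ_gls_weights : Z^T *m w = 1%:M.
Proof.
rewrite -scalemxAr mulmxA [Z^T *m M *m Z]mx11_scalar.
by rewrite scale_scalar_mx mulVf.
Qed.

Lemma qform_Sigma_gls_weights : qform Sg w = q^-1.
Proof.
rewrite qform_gls_weights.
have -> : Z^T *m M *m Sg *m M *m Z = Z^T *m M *m Z.
  by rewrite -[in RHS]gls_resid_idem !mulmxA.
by rewrite expr2 invfM mulrA mulfV ?mul1r.
Qed.

(* [Sg w] is a combination of [Z] and the columns of [X]. *)
Lemma gls_weights_orthogonal (d : 'cV[R]_n) :
  X^T *m d = 0 -> Z^T *m d = 0 -> d^T *m Sg *m w = 0.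
Proof.
move=> Xd Zd; rewrite -scalemxAr -mulmxA (mulmxA Sg) mul_gls_resid.
rewrite mulmxBl mul1mx mulmxBr !mulmxA -[d^T *m X]trmxK trmx_mul trmxK Xd.
by rewrite trmx0 !mul0mx subr0 -[d^T *m Z]trmxK trmx_mul trmxK Zd trmx0 scaler0.
Qed.

Hypothesis Sg_psd : forall v : 'cV[R]_n, 0 <= qform Sg v.

Lemma gls_weights_min (v : 'cV[R]_n) :
  X^T *m v = 0 -> Z^T *m v = 1%:M -> qform Sg w <= qform Sg v.
Proof.
move=> Xv Zv; have -> : v = w + (v - w) by rewrite addrC subrK.
have Xd : X^T *m (v - w) = 0 by rewrite mulmxBr Xv trX_gls_weights subrr.
have Zd : Z^T *m (v - w) = 0 by rewrite mulmxBr Zv trZ_gls_weights subrr.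
rewrite qformD // gls_weights_orthogonal // mxE mulr0 addr0 lerDl.
exact: Sg_psd.
Qed.

End GlsWeights.

Section Sigma.
Variables (R : realType) (n : nat) (sigma2 : R) (S : 'M[R]_n).
Local Notation Sigma r := (Sigma sigma2 r S).

Lemma qform_Sigma (r : R) (v : 'cV[R]_n) :
  qform (Sigma r) v = sigma2 * qform 1 v + r * qform S v.
Proof.
rewrite /qform /Defs.Sigma mulmxDr mul_mx_scalar -scalemxAr mulmxDl -!scalemxAl.
by rewrite !mxE mulmx1.
Qed.

Hypotheses (sigma2_gt0 : 0 < sigma2) (S_psd : psd S).

Lemma Sigma_sym (r : R) : (Sigma r)^T = Sigma r.
Proof. by rewrite /Defs.Sigma linearD /= linearZ /= tr_scalar_mx (proj1 S_psd). Qed.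

Lemma qform_Sigma_ge0 (r : R) (v : 'cV[R]_n) : 0 <= r -> 0 <= qform (Sigma r) v.
Proof.
move=> r_ge0; rewrite qform_Sigma.
by rewrite addr_ge0 ?mulr_ge0 ?qform1_ge0 ?(ltW sigma2_gt0) //; apply: (proj2 S_psd).
Qed.

Lemma qform_Sigma_le (r1 r2 : R) (v : 'cV[R]_n) :
  r1 <= r2 -> qform (Sigma r1) v <= qform (Sigma r2) v.
Proof.
move=> le_r12; rewrite !qform_Sigma lerD2l ler_wpM2r //; exact: (proj2 S_psd).
Qed.

Lemma Sigma_unit (r : R) : 0 <= r -> Sigma r \in unitmx.
Proof.
move=> r_ge0; rewrite unitmxE unitfE; apply/det0P => -[v v_neq0 vSigma].
have : qform (Sigma r) v^T = 0 by rewrite /qform trmxK vSigma mul0mx mxE.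
rewrite qform_Sigma => qv0.
have rS_v : 0 <= r * qform S v^T by rewrite mulr_ge0 //; apply: (proj2 S_psd).
have v_ge0 : 0 <= qform 1 v^T := qform1_ge0 _.
have v0 : qform 1 v^T = 0.
  apply/eqP; rewrite eq_le v_ge0 andbT -(pmulr_rle0 _ sigma2_gt0).
  by move/eqP: qv0; rewrite addr_eq0 => /eqP->; rewrite oppr_le0.
by move: v_neq0; rewrite -[v]trmxK (qform1_eq0 v0) trmx0 eqxx.
Qed.

Variables (p : nat) (X : 'M[R]_(n, p)) (Z : 'cV[R]_n).
Local Notation w r := (gls_weights (invmx (Sigma r)) X Z).

Lemma quadZE (r : R) : quadZ sigma2 r S X Z = qform (gls_resid (invmx (Sigma r)) X) Z.
Proof. by rewrite /quadZ /qform -gls_residEl /XSXinv !mulmxA. Qed.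

Lemma Delta_gls_weights (r : R) : Delta sigma2 r S X Z = qform S (w r).
Proof.
rewrite /Delta quadZE qform_gls_weights ?Sigma_sym //.
by congr (_ / _); rewrite -{1}gls_residEl -gls_residEr !mulmxA.
Qed.

Hypotheses (XSX_unit : forall r : R, 0 <= r -> X^T *m invmx (Sigma r) *m X \in unitmx)
  (q_neq0 : forall r : R, 0 <= r -> quadZ sigma2 r S X Z != 0).

Let gls_quad_neq0 r : 0 <= r -> qform (gls_resid (invmx (Sigma r)) X) Z != 0.
Proof. by rewrite -quadZE; apply: q_neq0. Qed.

Lemma Dd_gls_weights (r : R) : 0 <= r -> Dd sigma2 r S X Z = qform (Sigma r) (w r).
Proof.
move=> r_ge0; rewrite /Dd quadZE qform_Sigma_gls_weights //.
- exact: Sigma_unit.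
- exact: Sigma_sym.
- exact: XSX_unit.
- exact: gls_quad_neq0.
Qed.

Lemma Dd_le_gls_weights (r r' : R) :
  0 <= r -> 0 <= r' -> Dd sigma2 r S X Z <= qform (Sigma r) (w r').
Proof.
move=> r_ge0 r'_ge0; rewrite Dd_gls_weights //.
apply: gls_weights_min; rewrite ?Sigma_unit ?Sigma_sym ?XSX_unit ?gls_quad_neq0 //.
- by move=> v; apply: qform_Sigma_ge0.
- by apply: trX_gls_weights; apply: XSX_unit.
- by apply: trZ_gls_weights; apply: gls_quad_neq0.
Qed.

End Sigma.

Theorem proposition4 (R : realType) (n p : nat)
  (Z : 'cV[R]_n) (X : 'M[R]_(n, p)) (sigma2 : R) (S : 'M[R]_n) :
  (forall i, Z i ord0 = 0 \/ Z i ord0 = 1) ->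
  0 < sigma2 ->
  psd S ->
  (forall rho2 : R, 0 <= rho2 ->
     (X^T *m invmx (Sigma sigma2 rho2 S) *m X) \in unitmx) ->
  (forall rho2 : R, 0 <= rho2 -> quadZ sigma2 rho2 S X Z != 0) ->
  forall r1 r2 : R, 0 <= r1 -> r1 <= r2 ->
    Delta sigma2 r2 S X Z <= Delta sigma2 r1 S X Z /\
    Dd sigma2 r1 S X Z <= Dd sigma2 r2 S X Z.
Proof.
move=> _ s_gt0 S_psd XSX_unit q_neq0 r1 r2 r1_ge0.
rewrite le_eqVlt => /predU1P[<- | lt_r12]; first by split.
have r2_ge0 := le_trans r1_ge0 (ltW lt_r12).
have Dd_w := Dd_gls_weights s_gt0 S_psd XSX_unit q_neq0.
have Dd_le := Dd_le_gls_weights s_gt0 S_psd XSX_unit q_neq0.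
have min12 := Dd_le _ _ r1_ge0 r2_ge0.
have min21 := Dd_le _ _ r2_ge0 r1_ge0.
rewrite !Delta_gls_weights // (Dd_w r2) //.
split; last exact: le_trans min12 (qform_Sigma_le _ S_psd _ (ltW lt_r12)).
rewrite !Dd_w // !qform_Sigma in min12 min21.
exact: affine_min_slope_antitone lt_r12 min12 min21.
Qed.
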